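(* For all formulas $A,B$ of bilattice logic: if for every HBL $(\mathbb{L}_1,\mathbb{L}_2,\mathrm{n},\mathrm{p})$ and every assignment of the atoms $p_1$ to elements of $\mathbb{L}_1$ and $p_2$ to elements of $\mathbb{L}_2$ the interpretation of $t_1(A)$ is $\le_1$ the interpretation of $t_1(B)$, then $A\vDash_{\mathsf{B}}B$.
   Context: A heterogeneous bilattice (HBL) is a tuple $(\mathbb{L}_1,\mathbb{L}_2,\mathrm{n},\mathrm{p})$ where $\mathbb{L}_1=(L_1,\sqcap_1,\sqcup_1,0_1,1_1)$, $\mathbb{L}_2=(L_2,\sqcap_2,\sqcup_2,0_2,1_2)$ are bounded distributive lattices and $\mathrm{n}:\mathbb{L}_1\to\mathbb{L}_2$, $\mathrm{p}:\mathbb{L}_2\to\mathbb{L}_1$ are mutually inverse lattice isomorphisms; $\le_1$ is the order of $\mathbb{L}_1$. A bilattice is $(B,\le_t,\le_k,\neg)$ with $(B,\le_t)$ (operations $\wedge,\vee$) and $(B,\le_k)$ (operations $\otimes,\oplus$) lattices and $\neg$ satisfying: $a\le_tb\Rightarrow\neg b\le_t\neg a$, $a\le_kb\Rightarrow\neg a\le_k\neg b$, $\neg\neg a=a$. It is distributive if $x\circ(y\bullet z)=(x\circ y)\bullet(x\circ z)$ for all $\circ,\bullet\in\{\wedge,\vee,\otimes,\oplus\}$; bounds are $\mathtt{f},\mathtt{t}$ for $\le_t$ and $\bot,\top$ for $\le_k$. $\mathsf{B}$ is the class of bounded distributive bilattices. Formulas of bilattice logic: $A::=p\mid \mathtt{t}\mid\mathtt{f}\mid\top\mid\bot\mid\neg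 A\mid A\wedge A\mid A\vee A\mid A\otimes A\mid A\oplus A$, interpreted in bilattices in the obvious way. $A\vDash_{\mathsf{B}}C$ means: for every $\mathbb{B}\in\mathsf{B}$ and every assignment, if $A^{\mathbb{B}}\in F_{\mathtt{t}}$ then $C^{\mathbb{B}}\in F_{\mathtt{t}}$, where $F_{\mathtt{t}}=\{a\in B:\mathtt{t}\le_ka\}$. Translation into the two-sorted language (type-1 terms built from type-1 atoms $p_1$, $0_1,1_1,\sqcap_1,\sqcup_1$ and $\mathrm{p}$ applied to type-2 terms; type-2 terms analogously with $\mathrm{n}$): $t_1(p)=p_1$, $t_2(p)=p_2$; $t_1(\mathtt{t})=1_1,t_2(\mathtt{t})=0_2$; $t_1(\mathtt{f})=0_1,t_2(\mathtt{f})=1_2$; $t_1(\top)=1_1,t_2(\top)=1_2$; $t_1(\bot)=0_1,t_2(\bot)=0_2$; $t_1(A\wedge B)=t_1A\sqcap_1t_1B$, $t_2(A\wedge B)=t_2A\sqcup_2t_2B$; $t_1(A\vee B)=t_1A\sqcup_1t_1B$, $t_2(A\vee B)=t_2A\sqcap_2t_2B$; $t_1(A\otimes B)=t_1A\sqcap_1t_1B$, $t_2(A\otimes B)=t_2A\sqcap_2t_2B$; $t_1(A\oplus B)=t_1A\sqcup_1t_1B$, $t_2(A\oplus B)=t_2A\sqcup_2t_2B$; $t_1(\neg A)=\mathrm{p}\,t_2(A)$, $t_2(\neg A)=\mathrm{n}\,t_1(A)$. *)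

From HB Require Import structures.
From mathcomp Require Import all_boot order.
Set Implicit Arguments. Unset Strict Implicit. Unset Printing Implicit Defensive.
Import Order.TTheory.
Local Open Scope order_scope.

Inductive fm : Type :=
  | Atom : nat -> fm
  | Ftt : fm
  | Fff : fm
  | Ftop : fm
  | Fbot : fm
  | Fneg : fm -> fm
  | Fand : fm -> fm -> fm
  | For  : fm -> fm -> fm
  | Fotimes : fm -> fm -> fm
  | Foplus : fm -> fm -> fm.

(* The class B of the paper consists of bounded distributive bilattices; the
   bounds f,t (for <=_t) and bot,top (for <=_k) are part of the record, and
   distributivity is the separate predicate [distributive_bilattice]. *)
Record bilattice := Bilattice {
  bcar :> Type;
  le_t : bcar -> bcar -> Prop;
  le_k : bcar -> bcar -> Prop;
  bmeet_t : bcar -> bcar -> bcar;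
  bjoin_t : bcar -> bcar -> bcar;
  bmeet_k : bcar -> bcar -> bcar;
  bjoin_k : bcar -> bcar -> bcar;
  bneg : bcar -> bcar;
  bf : bcar; btt : bcar; bbot : bcar; btop : bcar;
  le_t_refl : forall a, le_t a a;
  le_t_trans : forall a b c, le_t a b -> le_t b c -> le_t a c;
  le_t_anti : forall a b, le_t a b -> le_t b a -> a = b;
  le_k_refl : forall a, le_k a a;
  le_k_trans : forall a b c, le_k a b -> le_k b c -> le_k a c;
  le_k_anti : forall a b, le_k a b -> le_k b a -> a = b;
  meet_t_glb : forall a b c, le_t c (bmeet_t a b) <-> (le_t c a /\ le_t c b);
  join_t_lub : forall a b c, le_t (bjoin_t a b) c <-> (le_t a c /\ le_t b c);
  meet_k_glb : forall a b c, le_k c (bmeet_k a b) <-> (le_k c a /\ le_k c b);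
  join_k_lub : forall a b c, le_k (bjoin_k a b) c <-> (le_k a c /\ le_k b c);
  bf_least : forall a, le_t bf a;
  btt_greatest : forall a, le_t a btt;
  bbot_least : forall a, le_k bbot a;
  btop_greatest : forall a, le_k a btop;
  neg_t : forall a b, le_t a b -> le_t (bneg b) (bneg a);
  neg_k : forall a b, le_k a b -> le_k (bneg a) (bneg b);
  neg_invol : forall a, bneg (bneg a) = a
}.

Inductive bop := OpWedge | OpVee | OpOtimes | OpOplus.

Definition bop_interp (B : bilattice) (o : bop) : B -> B -> B :=
  match o with
  | OpWedge => @bmeet_t B
  | OpVee => @bjoin_t B
  | OpOtimes => @bmeet_k B
  | OpOplus => @bjoin_k B
  end.

Definition distributive_bilattice (B : bilattice) : Prop :=
  forall (o b : bop) (x y z : B),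
    bop_interp o x (bop_interp b y z)
    = bop_interp b (bop_interp o x y) (bop_interp o x z).

Fixpoint beval (B : bilattice) (v : nat -> B) (A : fm) : B :=
  match A with
  | Atom i => v i
  | Ftt => btt B
  | Fff => bf B
  | Ftop => btop B
  | Fbot => bbot B
  | Fneg A1 => bneg (beval v A1)
  | Fand A1 A2 => bmeet_t (beval v A1) (beval v A2)
  | For A1 A2 => bjoin_t (beval v A1) (beval v A2)
  | Fotimes A1 A2 => bmeet_k (beval v A1) (beval v A2)
  | Foplus A1 A2 => bjoin_k (beval v A1) (beval v A2)
  end.

Definition Ft (B : bilattice) (a : B) : Prop := le_k (btt B) a.

Definition bconseq (A C : fm) : Prop :=
  forall B : bilattice, distributive_bilattice B ->
  forall v : nat -> B, Ft (beval v A) -> Ft (beval v C).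

Definition hbl_iso (d1 d2 : Order.disp_t)
    (L1 : tbDistrLatticeType d1) (L2 : tbDistrLatticeType d2)
    (n : L1 -> L2) (p : L2 -> L1) : Prop :=
  [/\ cancel n p, cancel p n,
      {morph n : x y / x `&` y >-> x `&` y}, {morph n : x y / x `|` y >-> x `|` y}
    & ({morph p : x y / x `&` y >-> x `&` y} /\ {morph p : x y / x `|` y >-> x `|` y})].

(* Interpretation of the translations t_1(A) (type 1) and t_2(A) (type 2),
   under assignments v1 (atoms p_1) and v2 (atoms p_2). *)
Section Translation.
Variables (d1 d2 : Order.disp_t)
  (L1 : tbDistrLatticeType d1) (L2 : tbDistrLatticeType d2)
  (n : L1 -> L2) (p : L2 -> L1) (v1 : nat -> L1) (v2 : nat -> L2).

Fixpoint t1 (A : fm) : L1 :=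
  match A with
  | Atom i => v1 i
  | Ftt => \top
  | Fff => \bot
  | Ftop => \top
  | Fbot => \bot
  | Fneg A1 => p (t2 A1)
  | Fand A1 A2 => t1 A1 `&` t1 A2
  | For A1 A2 => t1 A1 `|` t1 A2
  | Fotimes A1 A2 => t1 A1 `&` t1 A2
  | Foplus A1 A2 => t1 A1 `|` t1 A2
  end
with t2 (A : fm) : L2 :=
  match A with
  | Atom i => v2 i
  | Ftt => \bot
  | Fff => \top
  | Ftop => \top
  | Fbot => \bot
  | Fneg A1 => n (t1 A1)
  | Fand A1 A2 => t2 A1 `|` t2 A2
  | For A1 A2 => t2 A1 `&` t2 A2
  | Fotimes A1 A2 => t2 A1 `&` t2 A2
  | Foplus A1 A2 => t2 A1 `|` t2 A2
  end.
End Translation.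

From HB Require Import structures.
From mathcomp Require Import all_boot order.
From mathcomp Require Import boolp.
Import Order.TTheory.
Set Implicit Arguments. Unset Strict Implicit.

(* In a distributive bilattice, [a |-> ⊥ ∨ a] projects onto the truth
   interval [⊥, t]. It commutes with all four binary operations, and on
   [⊥, t] the operations ⊗, ⊕ coincide with ∧, ∨, so [⊥, t] is a bounded
   distributive lattice; moreover [a ∈ F_t] iff [⊥ ∨ a = t]. In the HBL
   ([⊥, t], [⊥, t], id, id) with [p_1 |-> ⊥ ∨ v p] and [p_2 |-> ⊥ ∨ ¬ v p],
   t_1(A) evaluates to [⊥ ∨ A] and t_2(A) to [⊥ ∨ ¬ A], so t_1(A) ≤ t_1(B)
   carries [⊥ ∨ A = t] over to [⊥ ∨ B = t]. *)

Section GlbOperation.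
Variables (T : Type) (le : T -> T -> Prop) (op : T -> T -> T).
Hypothesis refl_le : forall a, le a a.
Hypothesis trans_le : forall a b c, le a b -> le b c -> le a c.
Hypothesis anti_le : forall a b, le a b -> le b a -> a = b.
Hypothesis op_glb : forall a b c, le c (op a b) <-> le c a /\ le c b.

Lemma glb_lel a b : le (op a b) a.
Proof. by have [] := proj1 (op_glb a b (op a b)) (refl_le _). Qed.

Lemma glb_ler a b : le (op a b) b.
Proof. by have [] := proj1 (op_glb a b (op a b)) (refl_le _). Qed.

Lemma glbC : commutative op.
Proof.
have le_swap a b : le (op a b) (op b a).
  by apply/op_glb; split; [exact: glb_ler|exact: glb_lel].
by move=> a b; apply: anti_le.
Qed.

Lemma glbA : associative op.
Proof.
move=> a b c; apply: anti_le; apply/op_glb; split.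
- apply/op_glb; split; first exact: glb_lel.
  exact: trans_le (glb_ler _ _) (glb_lel _ _).
- exact: trans_le (glb_ler _ _) (glb_ler _ _).
- exact: trans_le (glb_lel _ _) (glb_lel _ _).
- apply/op_glb; split; last exact: glb_ler.
  exact: trans_le (glb_lel _ _) (glb_ler _ _).
Qed.

Lemma glbI : idempotent_op op.
Proof. by move=> a; apply: anti_le; [exact: glb_lel|apply/op_glb]. Qed.

Lemma le_glbE a b : le a b <-> op a b = a.
Proof.
split=> [lab|<-]; last exact: glb_ler.
by apply: anti_le; [exact: glb_lel|apply/op_glb].
Qed.

Lemma glb_morph_homo (f : T -> T) :
  {morph f : a b / op a b} -> {homo f : a b / le a b}.
Proof. by move=> fM a b /le_glbE lab; apply/le_glbE; rewrite -fM lab. Qed.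

End GlbOperation.

Section LubOperation.
Variables (T : Type) (le : T -> T -> Prop) (op : T -> T -> T).
Hypothesis refl_le : forall a, le a a.
Hypothesis trans_le : forall a b c, le a b -> le b c -> le a c.
Hypothesis anti_le : forall a b, le a b -> le b a -> a = b.
Hypothesis op_lub : forall a b c, le (op a b) c <-> le a c /\ le b c.

Let ge a b := le b a.
Let refl_ge a : ge a a := refl_le a.
Let trans_ge a b c (hab : ge a b) (hbc : ge b c) : ge a c := trans_le hbc hab.
Let anti_ge a b (hab : ge a b) (hba : ge b a) : a = b := anti_le hba hab.

Lemma lub_lel a b : le a (op a b).
Proof. exact: (glb_lel refl_ge op_lub). Qed.

Lemma lub_ler a b : le b (op a b).
Proof. exact: (glb_ler refl_ge op_lub). Qed.

Lemma lubC : commutative op.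
Proof. exact: (glbC refl_ge anti_ge op_lub). Qed.

Lemma lubA : associative op.
Proof. exact: (glbA refl_ge trans_ge anti_ge op_lub). Qed.

Lemma lubI : idempotent_op op.
Proof. exact: (glbI refl_ge anti_ge op_lub). Qed.

Lemma le_lubE a b : le a b <-> op a b = b.
Proof. by rewrite lubC; exact: (le_glbE refl_ge anti_ge op_lub). Qed.

End LubOperation.

Section InvolutionGlb.
Variables (T : Type) (le1 le2 : T -> T -> Prop) (op1 op2 : T -> T -> T).
Variable f : T -> T.
Hypothesis refl_le1 : forall a, le1 a a.
Hypothesis refl_le2 : forall a, le2 a a.
Hypothesis anti_le2 : forall a b, le2 a b -> le2 b a -> a = b.
Hypothesis op1_glb : forall a b c, le1 c (op1 a b) <-> le1 c a /\ le1 c b.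
Hypothesis op2_glb : forall a b c, le2 c (op2 a b) <-> le2 c a /\ le2 c b.
Hypothesis f_homo12 : {homo f : a b / le1 a b >-> le2 a b}.
Hypothesis f_homo21 : {homo f : a b / le2 a b >-> le1 a b}.
Hypothesis fK : involutive f.

Lemma involution_glb : {morph f : a b / op1 a b >-> op2 a b}.
Proof.
move=> a b; apply: anti_le2.
  apply/op2_glb; split; apply: f_homo12.
    exact: glb_lel refl_le1 op1_glb a b.
  exact: glb_ler refl_le1 op1_glb a b.
rewrite -[op2 _ _]fK; apply: f_homo12; apply/op1_glb; split.
  by have := f_homo21 (glb_lel refl_le2 op2_glb (f a) (f b)); rewrite fK.
by have := f_homo21 (glb_ler refl_le2 op2_glb (f a) (f b)); rewrite fK.
Qed.

End InvolutionGlb.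

Local Notation "a ≤t b" := (le_t a b) (at level 70).
Local Notation "a ≤k b" := (le_k a b) (at level 70).
Local Notation "a ∧ b" := (bmeet_t a b) (at level 40, left associativity).
Local Notation "a ∨ b" := (bjoin_t a b) (at level 50, left associativity).
Local Notation "a ⊗ b" := (bmeet_k a b) (at level 40, left associativity).
Local Notation "a ⊕ b" := (bjoin_k a b) (at level 50, left associativity).
Local Notation "¬ a" := (bneg a) (at level 35, right associativity).
Local Notation "⊥" := (bbot _).

Section BilatticeLaws.
Variable B : bilattice.
Implicit Types a b x y : B.

Lemma meet_t_lel a b : a ∧ b ≤t a.
Proof. exact: glb_lel (@le_t_refl B) (@meet_t_glb B) a b. Qed.
Lemma meet_t_ler a b : a ∧ b ≤t b.
Proof. exact: glb_ler (@le_t_refl B) (@meet_t_glb B) a b. Qed.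
Lemma join_t_lel a b : a ≤t a ∨ b.
Proof. exact: lub_lel (@le_t_refl B) (@join_t_lub B) a b. Qed.
Lemma join_t_ler a b : b ≤t a ∨ b.
Proof. exact: lub_ler (@le_t_refl B) (@join_t_lub B) a b. Qed.

Lemma meet_tC : commutative (@bmeet_t B).
Proof. exact: glbC (@le_t_refl B) (@le_t_anti B) (@meet_t_glb B). Qed.
Lemma join_tC : commutative (@bjoin_t B).
Proof. exact: lubC (@le_t_refl B) (@le_t_anti B) (@join_t_lub B). Qed.
Lemma meet_kC : commutative (@bmeet_k B).
Proof. exact: glbC (@le_k_refl B) (@le_k_anti B) (@meet_k_glb B). Qed.
Lemma join_kC : commutative (@bjoin_k B).
Proof. exact: lubC (@le_k_refl B) (@le_k_anti B) (@join_k_lub B). Qed.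

Lemma meet_tA : associative (@bmeet_t B).
Proof.
exact: glbA (@le_t_refl B) (@le_t_trans B) (@le_t_anti B) (@meet_t_glb B).
Qed.
Lemma join_tA : associative (@bjoin_t B).
Proof.
exact: lubA (@le_t_refl B) (@le_t_trans B) (@le_t_anti B) (@join_t_lub B).
Qed.

Lemma meet_tI : idempotent_op (@bmeet_t B).
Proof. exact: glbI (@le_t_refl B) (@le_t_anti B) (@meet_t_glb B). Qed.
Lemma join_tI : idempotent_op (@bjoin_t B).
Proof. exact: lubI (@le_t_refl B) (@le_t_anti B) (@join_t_lub B). Qed.
Lemma meet_kI : idempotent_op (@bmeet_k B).
Proof. exact: glbI (@le_k_refl B) (@le_k_anti B) (@meet_k_glb B). Qed.
Lemma join_kI : idempotent_op (@bjoin_k B).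
Proof. exact: lubI (@le_k_refl B) (@le_k_anti B) (@join_k_lub B). Qed.

Lemma le_t_meetE a b : a ≤t b <-> a ∧ b = a.
Proof. exact: le_glbE (@le_t_refl B) (@le_t_anti B) (@meet_t_glb B) a b. Qed.
Lemma le_t_joinE a b : a ≤t b <-> a ∨ b = b.
Proof. exact: le_lubE (@le_t_refl B) (@le_t_anti B) (@join_t_lub B) a b. Qed.
Lemma le_k_meetE a b : a ≤k b <-> a ⊗ b = a.
Proof. exact: le_glbE (@le_k_refl B) (@le_k_anti B) (@meet_k_glb B) a b. Qed.
Lemma le_k_joinE a b : a ≤k b <-> a ⊕ b = b.
Proof. exact: le_lubE (@le_k_refl B) (@le_k_anti B) (@join_k_lub B) a b. Qed.

Lemma neg_meet_t a b : ¬ (a ∧ b) = ¬ a ∨ ¬ b.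
Proof.
have anti_ge x y : y ≤t x -> x ≤t y -> x = y by move=> ? ?; apply: le_t_anti.
exact: (involution_glb (le2 := fun x y => y ≤t x)) (@le_t_refl B) (@le_t_refl B)
  anti_ge (@meet_t_glb B) (@join_t_lub B) (@neg_t B) (fun x y => @neg_t B y x)
  (@neg_invol B) a b.
Qed.

Lemma neg_join_t a b : ¬ (a ∨ b) = ¬ a ∧ ¬ b.
Proof. by rewrite -[a in LHS]neg_invol -[b in LHS]neg_invol -neg_meet_t neg_invol. Qed.

Lemma neg_meet_k a b : ¬ (a ⊗ b) = ¬ a ⊗ ¬ b.
Proof.
exact: involution_glb (@le_k_refl B) (@le_k_refl B) (@le_k_anti B) (@meet_k_glb B)
  (@meet_k_glb B) (@neg_k B) (@neg_k B) (@neg_invol B) a b.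
Qed.

Lemma neg_join_k a b : ¬ (a ⊕ b) = ¬ a ⊕ ¬ b.
Proof.
have anti_ge x y : y ≤k x -> x ≤k y -> x = y by move=> ? ?; apply: le_k_anti.
exact: (involution_glb (le1 := fun x y => y ≤k x) (le2 := fun x y => y ≤k x))
  (@le_k_refl B) (@le_k_refl B) anti_ge (@join_k_lub B) (@join_k_lub B)
  (fun x y => @neg_k B y x) (fun x y => @neg_k B y x) (@neg_invol B) a b.
Qed.

Lemma neg_bot : ¬ ⊥ = ⊥ :> B.
Proof.
apply: le_k_anti; last exact: bbot_least.
by rewrite -[X in _ ≤k X]neg_invol; apply: neg_k; apply: bbot_least.
Qed.

Lemma neg_top : ¬ btop B = btop B.
Proof.
apply: le_k_anti; first exact: btop_greatest.
by rewrite -[X in X ≤k _]neg_invol; apply: neg_k; apply: btop_greatest.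
Qed.

Lemma neg_tt : ¬ btt B = bf B.
Proof.
apply: le_t_anti; last exact: bf_least.
by rewrite -[X in _ ≤t X]neg_invol; apply: neg_t; apply: btt_greatest.
Qed.

Lemma neg_ff : ¬ bf B = btt B.
Proof. by rewrite -neg_tt neg_invol. Qed.

End BilatticeLaws.

Section DistributiveBilattice.
Variables (B : bilattice) (dB : distributive_bilattice B).
Implicit Types a b c x y : B.

Lemma bopC o : commutative (bop_interp (B := B) o).
Proof. by case: o; [exact: meet_tC|exact: join_tC|exact: meet_kC|exact: join_kC]. Qed.

Lemma bop_homor_t o c : {homo bop_interp o c : a b / a ≤t b}.
Proof.
exact: glb_morph_homo (@le_t_refl B) (@le_t_anti B) (@meet_t_glb B) _
  (dB o OpWedge c).
Qed.

Lemma bop_homor_k o c : {homo bop_interp o c : a b / a ≤k b}.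
Proof.
exact: glb_morph_homo (@le_k_refl B) (@le_k_anti B) (@meet_k_glb B) _
  (dB o OpOtimes c).
Qed.

Lemma bop_homo2_t o a b c d :
  a ≤t b -> c ≤t d -> bop_interp o a c ≤t bop_interp o b d.
Proof.
move=> hab hcd; apply: le_t_trans (bop_homor_t o a hcd) _.
by rewrite !(bopC o _ d); apply: bop_homor_t.
Qed.

Lemma bop_homo2_k o a b c d :
  a ≤k b -> c ≤k d -> bop_interp o a c ≤k bop_interp o b d.
Proof.
move=> hab hcd; apply: le_k_trans (bop_homor_k o a hcd) _.
by rewrite !(bopC o _ d); apply: bop_homor_k.
Qed.

Lemma join_k_bot x : ⊥ ⊕ x = x.
Proof. by apply/le_k_joinE; apply: bbot_least. Qed.

Lemma join_t_bot x : ⊥ ≤t x -> ⊥ ∨ x = x.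
Proof. by move/le_t_joinE. Qed.

Lemma le_k_join_t_upper x y : ⊥ ≤t x -> x ≤k x ∨ y.
Proof.
move=> hx; rewrite -[X in X ≤k _](join_t_bot hx) join_tC.
exact: (bop_homor_k OpVee x (bbot_least y)).
Qed.

Lemma meet_k_le_t_upper x y : ⊥ ≤t x -> x ⊗ y ≤t x.
Proof.
(* x ∨ (x ⊗ y) = x ⊗ (x ∨ y) = x, since x ≤k x ∨ y. *)
move=> hx; apply/le_t_joinE; rewrite join_tC.
have /= -> := dB OpVee OpOtimes x x y.
by rewrite join_tI; apply/le_k_meetE; apply: le_k_join_t_upper.
Qed.

Lemma meet_k_upper x y : ⊥ ≤t x -> ⊥ ≤t y -> x ⊗ y = x ∧ y.
Proof.
move=> hx hy; apply: le_t_anti.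
  apply/meet_t_glb; split; first exact: meet_k_le_t_upper.
  by rewrite meet_kC; apply: meet_k_le_t_upper.
rewrite -[X in X ≤t _]meet_kI.
exact: (bop_homo2_t OpOtimes (meet_t_lel x y) (meet_t_ler x y)).
Qed.

Lemma join_k_upper x y : ⊥ ≤t x -> ⊥ ≤t y -> x ⊕ y = x ∨ y.
Proof.
move=> hx hy; apply: le_t_anti.
  rewrite -[X in _ ≤t X]join_kI.
  exact: (bop_homo2_t OpOplus (join_t_lel x y) (join_t_ler x y)).
apply/join_t_lub; split.
  by rewrite -[X in X ≤t _]join_k_bot join_kC; apply: (bop_homor_t OpOplus x hy).
by rewrite -[X in X ≤t _]join_k_bot !(join_kC _ y); apply: (bop_homor_t OpOplus y hx).
Qed.

Lemma le_k_le_t_upper x y : ⊥ ≤t x -> ⊥ ≤t y -> x ≤k y -> x ≤t y.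
Proof. by move=> hx hy /le_k_meetE hxy; apply/le_t_meetE; rewrite -meet_k_upper. Qed.

Definition truth_part a := ⊥ ∨ a.

Lemma truth_part_ge a : ⊥ ≤t truth_part a.
Proof. exact: join_t_lel. Qed.

Lemma truth_part_bop o : {morph truth_part : a b / bop_interp o a b}.
Proof. exact: dB OpVee o ⊥. Qed.

Lemma truth_part_le_k a : truth_part a ≤k a.
Proof.
rewrite -[X in _ ≤k X]join_tI.
exact: (bop_homo2_k OpVee (bbot_least a) (le_k_refl a)).
Qed.

Lemma truth_part_tt : truth_part (btt B) = btt B.
Proof. by apply/le_t_joinE; apply: btt_greatest. Qed.

Lemma Ft_truth_part a : Ft a <-> truth_part a = btt B.
Proof.
split=> [ta|ga]; last by rewrite /Ft -ga; apply: truth_part_le_k.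
apply: le_t_anti; first exact: btt_greatest.
apply: le_k_le_t_upper; [exact: btt_greatest|exact: truth_part_ge|].
by rewrite -truth_part_tt; apply: (bop_homor_k OpVee).
Qed.

Lemma truth_part_top : truth_part (btop B) = btt B.
Proof. by apply/Ft_truth_part; apply: btop_greatest. Qed.

Lemma truth_part_ff : truth_part (bf B) = ⊥.
Proof. by rewrite /truth_part join_tC; apply/le_t_joinE; apply: bf_least. Qed.

Lemma truth_part_bot : truth_part ⊥ = ⊥ :> B.
Proof. exact: join_tI. Qed.

End DistributiveBilattice.

Local Open Scope order_scope.

Section TruthInterval.
Variables (B : bilattice) (dB : distributive_bilattice B).

(* The argument is a phantom that lets the lattice instance below use [dB]. *)
Definition truth_interval (_ : distributive_bilattice B) := {x : B | ⊥ ≤t x}.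
Local Notation L := (truth_interval dB).

HB.instance Definition _ := gen_eqMixin L.
HB.instance Definition _ := gen_choiceMixin L.

Lemma truth_interval_inj (x y : L) : sval x = sval y -> x = y.
Proof. by case: x => x hx; case: y => y hy /= exy; apply: eq_exist. Qed.

Definition interval_meet (x y : L) : L :=
  exist _ (sval x ∧ sval y) (proj2 (meet_t_glb _ _ _) (conj (svalP x) (svalP y))).
Definition interval_join (x y : L) : L :=
  exist _ (sval x ∨ sval y) (le_t_trans (svalP x) (join_t_lel _ _)).

Lemma interval_meetC : commutative interval_meet.
Proof. by move=> x y; apply: truth_interval_inj; apply: meet_tC. Qed.
Lemma interval_joinC : commutative interval_join.
Proof. by move=> x y; apply: truth_interval_inj; apply: join_tC. Qed.
Lemma interval_meetA : associative interval_meet.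
Proof. by move=> x y z; apply: truth_interval_inj; apply: meet_tA. Qed.
Lemma interval_joinA : associative interval_join.
Proof. by move=> x y z; apply: truth_interval_inj; apply: join_tA. Qed.
Lemma interval_joinKI y x : interval_meet x (interval_join x y) = x.
Proof. by apply: truth_interval_inj; apply/le_t_meetE; apply: join_t_lel. Qed.
Lemma interval_meetKU y x : interval_join x (interval_meet x y) = x.
Proof.
by apply: truth_interval_inj; rewrite /= join_tC; apply/le_t_joinE; apply: meet_t_lel.
Qed.
Lemma interval_meetI : idempotent_op interval_meet.
Proof. by move=> x; apply: truth_interval_inj; apply: meet_tI. Qed.
Lemma interval_meetUl : left_distributive interval_meet interval_join.
Proof.
move=> x y z; apply: truth_interval_inj => /=.
rewrite meet_tC; have /= -> := dB OpWedge OpVee (sval z) (sval x) (sval y).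
by rewrite !(meet_tC (sval z)).
Qed.

HB.instance Definition _ := Order.isMeetJoinDistrLattice.Build (Order.Disp tt tt) L
  (fun _ _ => erefl) (fun _ _ => erefl) interval_meetC interval_joinC
  interval_meetA interval_joinA interval_joinKI interval_meetKU
  interval_meetUl interval_meetI.

Definition interval_bot : L := exist _ ⊥ (le_t_refl _).
Definition interval_top : L := exist _ (btt B) (btt_greatest _).

Lemma interval_le0x (x : L) : interval_bot <= x.
Proof. by apply/eqP; apply: truth_interval_inj; apply/le_t_meetE; apply: svalP. Qed.
Lemma interval_lex1 (x : L) : x <= interval_top.
Proof.
by apply/eqP; apply: truth_interval_inj; apply/le_t_meetE; apply: btt_greatest.
Qed.

HB.instance Definition _ := Order.hasBottom.Build (Order.Disp tt tt) L interval_le0x.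
HB.instance Definition _ := Order.hasTop.Build (Order.Disp tt tt) L interval_lex1.

Definition to_interval (a : B) : L := exist _ (truth_part a) (truth_part_ge a).

Lemma to_interval_meet_t a b : to_interval (a ∧ b) = to_interval a `&` to_interval b.
Proof. by apply: truth_interval_inj; apply: (truth_part_bop dB OpWedge). Qed.
Lemma to_interval_join_t a b : to_interval (a ∨ b) = to_interval a `|` to_interval b.
Proof. by apply: truth_interval_inj; apply: (truth_part_bop dB OpVee). Qed.
Lemma to_interval_meet_k a b : to_interval (a ⊗ b) = to_interval a `&` to_interval b.
Proof.
apply: truth_interval_inj; rewrite /= (truth_part_bop dB OpOtimes) /=.
by apply: meet_k_upper; [exact: dB|exact: truth_part_ge|exact: truth_part_ge].
Qed.
Lemma to_interval_join_k a b : to_interval (a ⊕ b) = to_interval a `|` to_interval b.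
Proof.
apply: truth_interval_inj; rewrite /= (truth_part_bop dB OpOplus) /=.
by apply: join_k_upper; [exact: dB|exact: truth_part_ge|exact: truth_part_ge].
Qed.
Lemma to_interval_tt : to_interval (btt B) = \top.
Proof. exact/truth_interval_inj/truth_part_tt. Qed.
Lemma to_interval_top : to_interval (btop B) = \top.
Proof. exact/truth_interval_inj/truth_part_top. Qed.
Lemma to_interval_ff : to_interval (bf B) = \bot.
Proof. exact/truth_interval_inj/truth_part_ff. Qed.
Lemma to_interval_bot : to_interval ⊥ = \bot.
Proof. exact/truth_interval_inj/truth_part_bot. Qed.

Lemma Ft_to_interval a : Ft a <-> to_interval a = \top.
Proof.
split=> [/(Ft_truth_part dB) ta|/(congr1 sval) ta]; last exact/(Ft_truth_part dB).
exact: truth_interval_inj.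
Qed.

Lemma translation_to_interval (v : nat -> B) (A : fm) :
  let v1 i := to_interval (v i) in let v2 i := to_interval (¬ v i) in
  t1 id id v1 v2 A = to_interval (beval v A) /\
  t2 id id v1 v2 A = to_interval (¬ beval v A).
Proof.
elim: A => [i|||||A [IH1 IH2]|A [IH1 IH2] C [IH3 IH4]|A [IH1 IH2] C [IH3 IH4]
  |A [IH1 IH2] C [IH3 IH4]|A [IH1 IH2] C [IH3 IH4]] /=.
- by [].
- by rewrite neg_tt to_interval_tt to_interval_ff.
- by rewrite neg_ff to_interval_tt to_interval_ff.
- by rewrite neg_top to_interval_top.
- by rewrite neg_bot to_interval_bot.
- by rewrite IH1 IH2 neg_invol.
- by rewrite IH1 IH2 IH3 IH4 neg_meet_t to_interval_meet_t to_interval_join_t.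
- by rewrite IH1 IH2 IH3 IH4 neg_join_t to_interval_meet_t to_interval_join_t.
- by rewrite IH1 IH2 IH3 IH4 neg_meet_k !to_interval_meet_k.
- by rewrite IH1 IH2 IH3 IH4 neg_join_k !to_interval_join_k.
Qed.

End TruthInterval.

Theorem mainTheorem6 (A B : fm) :
  (forall (d1 d2 : Order.disp_t)
          (L1 : tbDistrLatticeType d1) (L2 : tbDistrLatticeType d2)
          (n : L1 -> L2) (p : L2 -> L1),
      hbl_iso n p ->
      forall (v1 : nat -> L1) (v2 : nat -> L2),
        t1 n p v1 v2 A <= t1 n p v1 v2 B) ->
  bconseq A B.
Proof.
move=> hyp Bl dB v /(Ft_to_interval dB) tA.
have iso : hbl_iso (@id (truth_interval dB)) id by split.
have := hyp _ _ _ _ _ _ iso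
  (fun i => to_interval dB (v i)) (fun i => to_interval dB (¬ v i)).
rewrite (proj1 (translation_to_interval dB v A)) (proj1 (translation_to_interval dB v B)).
by rewrite tA le1x => /eqP /(Ft_to_interval dB).
Qed.
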